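(* Suppose that random variables $X',Y',X'',Y''$ satisfy (1) $(X',Y')\overset{d}{=}(X'',Y'')$; (2) $((X',Y'),(X'',Y''))\overset{d}{=}((X',Y''),(X'',Y'))$; (3) $(X',Y')$ and $(X'',Y'')$ are independent. Then $X',X'',Y',Y''$ are independent.
   Context: $\overset{d}{=}$ denotes equality in distribution. *)

From HB Require Import structures.
From mathcomp Require Import all_boot all_order all_algebra.
From mathcomp Require Import all_classical all_reals all_analysis.
Set Implicit Arguments. Unset Strict Implicit. Unset Printing Implicit Defensive.
Import Order.TTheory GRing.Theory Num.Theory.
Local Open Scope classical_set_scope.
Local Open Scope ring_scope.

Definition pairRV (T U V : Type) (X : T -> U) (Y : T -> V) : T -> U * V :=
  fun w => (X w, Y w).

Definition eq_in_law d (T : measurableType d) (R : realType) (P : probability T R)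
  d' (U : measurableType d') (X Y : T -> U) : Prop :=
  forall A : set U, measurable A -> P (X @^-1` A) = P (Y @^-1` A).

Definition indep2 d (T : measurableType d) (R : realType) (P : probability T R)
  d1 (U1 : measurableType d1) d2 (U2 : measurableType d2)
  (X : T -> U1) (Y : T -> U2) : Prop :=
  forall (A : set U1) (B : set U2), measurable A -> measurable B ->
    P (X @^-1` A `&` Y @^-1` B) = (P (X @^-1` A) * P (Y @^-1` B))%E.

(* Mutual independence of four random elements (product rule for all
   measurable sets; taking some sets to be the whole space gives the
   product rule for every subfamily). *)
Definition indep4 d (T : measurableType d) (R : realType) (P : probability T R)
  d1 (U1 : measurableType d1) d2 (U2 : measurableType d2)
  d3 (U3 : measurableType d3) d4 (U4 : measurableType d4)
  (X1 : T -> U1) (X2 : T -> U2) (X3 : T -> U3) (X4 : T -> U4) : Prop :=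
  forall (A1 : set U1) (A2 : set U2) (A3 : set U3) (A4 : set U4),
    measurable A1 -> measurable A2 -> measurable A3 -> measurable A4 ->
    P (X1 @^-1` A1 `&` X2 @^-1` A2 `&` X3 @^-1` A3 `&` X4 @^-1` A4) =
    (P (X1 @^-1` A1) * P (X2 @^-1` A2) * P (X3 @^-1` A3) * P (X4 @^-1` A4))%E.

(* The law m of (X', Y') determines the joint law of the four variables:
   by (1) and (3), P(X' in A, Y' in B, X'' in C, Y'' in D) = m(A x B) m(C x D),
   and by (2) the same probability equals m(A x D) m(C x B).  Taking C and D to
   be the whole spaces gives m(A x B) = m(A x SY) m(SX x B), i.e. X' and Y' are
   independent; by (1) so are X'' and Y'', and (3) then splits all four. *)
From HB Require Import structures.
From mathcomp Require Import all_boot all_order all_algebra.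
From mathcomp Require Import all_classical all_reals all_analysis.
Local Open Scope classical_set_scope.
Local Open Scope ring_scope.

Lemma preimage_pairRV_setX (T U V : Type) (X : T -> U) (Y : T -> V)
    (A : set U) (B : set V) :
  pairRV X Y @^-1` (A `*` B) = X @^-1` A `&` Y @^-1` B.
Proof. by []. Qed.

Section law_of_pairs.
Context {d} {T : measurableType d} {R : realType} {P : probability T R}.
Context {d1} {U : measurableType d1} {d2} {V : measurableType d2}.

Lemma eq_in_law_setX {X X2 : T -> U} {Y Y2 : T -> V} {A : set U} {B : set V} :
  eq_in_law P (pairRV X Y) (pairRV X2 Y2) -> measurable A -> measurable B ->
  P (X @^-1` A `&` Y @^-1` B) = P (X2 @^-1` A `&` Y2 @^-1` B).
Proof.
by move=> XY mA mB; rewrite -!preimage_pairRV_setX; apply: XY; apply: measurableX.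
Qed.

Lemma eq_in_law_fst {X X2 : T -> U} {Y Y2 : T -> V} {A : set U} :
  eq_in_law P (pairRV X Y) (pairRV X2 Y2) -> measurable A ->
  P (X @^-1` A) = P (X2 @^-1` A).
Proof.
move=> XY mA; have := eq_in_law_setX XY mA (@measurableT _ V).
by rewrite !preimage_setT !setIT.
Qed.

Lemma eq_in_law_snd {X X2 : T -> U} {Y Y2 : T -> V} {B : set V} :
  eq_in_law P (pairRV X Y) (pairRV X2 Y2) -> measurable B ->
  P (Y @^-1` B) = P (Y2 @^-1` B).
Proof.
move=> XY mB; have := eq_in_law_setX XY (@measurableT _ U) mB.
by rewrite !preimage_setT !setTI.
Qed.

Lemma indep2_eq_in_law {X X2 : T -> U} {Y Y2 : T -> V} :
  eq_in_law P (pairRV X Y) (pairRV X2 Y2) -> indep2 P X Y -> indep2 P X2 Y2.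
Proof.
move=> XY iXY A B mA mB.
rewrite -(eq_in_law_setX XY mA mB) iXY //.
by rewrite (eq_in_law_fst XY mA) (eq_in_law_snd XY mB).
Qed.

End law_of_pairs.

Section exchangeable_pairs.
Context {d} {T : measurableType d} {R : realType} {P : probability T R}.
Context {dx} {SX : measurableType dx} {dy} {SY : measurableType dy}.
Context {X' X'' : T -> SX} {Y' Y'' : T -> SY}.
Hypothesis law_pairs : eq_in_law P (pairRV X' Y') (pairRV X'' Y'').
Hypothesis law_swap : eq_in_law P (pairRV (pairRV X' Y') (pairRV X'' Y''))
                            (pairRV (pairRV X' Y'') (pairRV X'' Y')).
Hypothesis indep_pairs : indep2 P (pairRV X' Y') (pairRV X'' Y'').

Let m (A : set SX) (B : set SY) := P (X' @^-1` A `&` Y' @^-1` B).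

Let joint := pairRV (pairRV X' Y') (pairRV X'' Y'').

Lemma joint_law_product {A B C D} :
  measurable A -> measurable B -> measurable C -> measurable D ->
  P (joint @^-1` ((A `*` B) `*` (C `*` D))) = (m A B * m C D)%E.
Proof.
move=> mA mB mC mD.
rewrite preimage_pairRV_setX indep_pairs; try exact: measurableX.
by rewrite !preimage_pairRV_setX -(eq_in_law_setX law_pairs mC mD).
Qed.

Lemma law_exchange {A B C D} :
  measurable A -> measurable B -> measurable C -> measurable D ->
  (m A B * m C D = m A D * m C B)%E.
Proof.
move=> mA mB mC mD; rewrite -joint_law_product // -joint_law_product //.
rewrite law_swap; last by apply: measurableX; apply: measurableX.
by congr (P _); apply/seteqP; split=> w /=; rewrite /pairRV /=; tauto.
Qed.

Lemma indep2_first_pair : indep2 P X' Y'.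
Proof.
move=> A B mA mB.
have mTT : m setT setT = 1%E by rewrite /m !preimage_setT setIT probability_setT.
have := law_exchange mA mB (@measurableT _ SX) (@measurableT _ SY).
by rewrite mTT mule1 /m !preimage_setT setIT setTI.
Qed.

End exchangeable_pairs.

Theorem mainTheorem5 (d : measure_display) (T : measurableType d) (R : realType)
  (P : probability T R)
  (dx : measure_display) (SX : measurableType dx)
  (dy : measure_display) (SY : measurableType dy)
  (X' X'' : T -> SX) (Y' Y'' : T -> SY)
  (mX' : measurable_fun setT X') (mX'' : measurable_fun setT X'')
  (mY' : measurable_fun setT Y') (mY'' : measurable_fun setT Y'')
  (H1 : eq_in_law P (pairRV X' Y') (pairRV X'' Y''))
  (H2 : eq_in_law P (pairRV (pairRV X' Y') (pairRV X'' Y''))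
                    (pairRV (pairRV X' Y'') (pairRV X'' Y')))
  (H3 : indep2 P (pairRV X' Y') (pairRV X'' Y'')) :
  indep4 P X' X'' Y' Y''.
Proof.
move=> A1 A2 A3 A4 mA1 mA2 mA3 mA4.
have iXY' := indep2_first_pair H1 H2 H3.
have iXY'' := indep2_eq_in_law H1 iXY'.
have -> : X' @^-1` A1 `&` X'' @^-1` A2 `&` Y' @^-1` A3 `&` Y'' @^-1` A4 =
          pairRV X' Y' @^-1` (A1 `*` A3) `&` pairRV X'' Y'' @^-1` (A2 `*` A4).
  by apply/seteqP; split=> w /=; rewrite /pairRV /=; tauto.
rewrite H3; try exact: measurableX.
rewrite !preimage_pairRV_setX iXY' // iXY'' //.
by rewrite -!muleA (muleCA (P (Y' @^-1` A3))).
Qed.
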